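(* For real numbers $y,z$ let $h_{y,z}(u):=uy+(1-u)z+2u\ln u+2(1-u)\ln(1-u)+1$ for $u\in(0,1)$, and let $U$ be uniform on $(0,1)$. Then for all real $t$ (with $t\neq 0$), $\left|\mathbf{E}e^{ith_{y,z}(U)}\right|\le 2|t|^{-1/2}$. *)

From Stdlib Require Import Reals.
From Coquelicot Require Import Coquelicot.
Open Scope R_scope.

Definition h (y z u : R) : R :=
  u * y + (1 - u) * z + 2 * u * ln u + 2 * (1 - u) * ln (1 - u) + 1.

Definition cexpi (s : R) : C := (cos s, sin s).

(* E e^{i t h_{y,z}(U)} for U uniform on (0,1): the integral over [0,1]
   (the endpoints have measure zero). *)
Definition charfun_h (y z t : R) : C :=
  RInt (V := C_R_CompleteNormedModule) (fun u => cexpi (t * h y z u)) 0 1.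

From Stdlib Require Import Reals Lra.
From Coquelicot Require Import Coquelicot.
Open Scope R_scope.

(* The phase [t h] has second derivative [t (2/u + 2/(1-u))], of modulus at least [8 |t|], and
   a single stationary point [m] where [h'] vanishes.  Pairing the integral with its own
   conjugate direction reduces the claim to bounding real integrals of [A cos + B sin] along
   the phase.  On an interval where the phase derivative is at least [D] and the second
   derivative keeps a sign, such an integral is at most [2 M / D] (van der Corput's first
   derivative test, with [M^2 >= A^2 + B^2]).  Since [|h'(u)| >= 8 |u - m|], the pieces at
   distance at least [r] from [m] contribute [M / (2 sqrt |t|)] each for [r = 1/(2 sqrt |t|)],
   and the window of width [2 r] around [m] contributes at most [M / sqrt |t|]. *)

Lemma ln_le_sub_1 (x : R) : 0 < x -> ln x <= x - 1.
Proof.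
  intros hx. pose proof (exp_ineq1_le (ln x)) as hexp.
  rewrite exp_ln in hexp; lra.
Qed.

Lemma Rabs_xlnx_le (x : R) : 0 < x <= 1 -> Rabs (x * ln x) <= 2 * sqrt x.
Proof.
  intros hx. set (s := sqrt x).
  assert (hs : 0 < s) by (apply sqrt_lt_R0; lra).
  assert (hss : s * s = x) by (apply sqrt_sqrt; lra).
  assert (hs1 : s <= 1) by nra.
  assert (hln : ln x = 2 * ln s) by (rewrite <- hss, ln_mult by lra; ring).
  assert (hln_neg : ln s <= 0) by (rewrite <- ln_1; apply ln_le; lra).
  (* [- ln s = ln (1/s) <= 1/s] *)
  assert (hinv : ln (/ s) <= / s - 1) by (apply ln_le_sub_1, Rinv_0_lt_compat; lra).
  rewrite ln_Rinv in hinv by lra.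
  assert (s * / s = 1) by (field; lra).
  rewrite hln, <- hss, Rabs_left1 by nra.
  nra.
Qed.

Lemma continuity_pt_xlnx (x : R) : 0 <= x -> continuity_pt (fun u => u * ln u) x.
Proof.
  intros hx. destruct (Req_dec x 0) as [->|hx0].
  - intros eps heps.
    assert (hdelta : 0 < Rmin 1 ((eps / 2) ^ 2)) by (apply Rmin_pos; [lra|apply pow_lt; lra]).
    pose proof (Rmin_l 1 ((eps / 2) ^ 2)). pose proof (Rmin_r 1 ((eps / 2) ^ 2)).
    set (delta := Rmin 1 ((eps / 2) ^ 2)) in *. clearbody delta.
    exists delta. split; [exact hdelta|].
    intros u [_ hu]. simpl in hu |- *. unfold R_dist in *.
    rewrite Rmult_0_l, Rminus_0_r. rewrite Rminus_0_r in hu.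
    destruct (Rle_dec u 0) as [hneg|hpos].
    + assert (ln u = 0) as -> by (unfold ln; destruct (Rlt_dec 0 u); [exfalso; lra|reflexivity]).
      rewrite Rmult_0_r, Rabs_R0. lra.
    + rewrite Rabs_right in hu by lra.
      eapply Rle_lt_trans; [apply Rabs_xlnx_le; lra|].
      assert (sqrt u < eps / 2); [|lra].
      replace (eps / 2) with (sqrt ((eps / 2) ^ 2)) by (apply sqrt_pow2; lra).
      apply sqrt_lt_1; lra.
  - apply derivable_continuous_pt. exists (1 * ln x + x * / x).
    apply derivable_pt_lim_mult; [apply derivable_pt_lim_id|apply derivable_pt_lim_ln; lra].
Qed.

Lemma RInt_le_mul_length (f : R -> R) (a b M : R) :
  a <= b -> ex_RInt f a b -> (forall u, a < u < b -> f u <= M) ->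
  RInt f a b <= M * (b - a).
Proof.
  intros hab hf hM.
  eapply Rle_trans; [apply (RInt_le f (fun _ => M)); auto; apply ex_RInt_const|].
  rewrite RInt_const. right. cbv [scal]. simpl. unfold mult. simpl. ring.
Qed.

Lemma RInt_le_sub_antiderivative (f G g : R -> R) (a b : R) :
  a <= b ->
  (forall u, a <= u <= b -> is_derive G u (g u)) ->
  (forall u, a <= u <= b -> continuity_pt g u) ->
  (forall u, a < u < b -> f u <= g u) ->
  ex_RInt f a b ->
  RInt f a b <= G b - G a.
Proof.
  intros hab hG hg hfg hf.
  assert (hint : is_RInt g a b (G b - G a)).
  { apply (is_RInt_derive (V := R_CompleteNormedModule)); rewrite Rmin_left, Rmax_right by lra.
    - exact hG.
    - intros u hu. apply continuity_pt_filterlim, hg, hu. }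
  rewrite <- (is_RInt_unique _ _ _ _ hint).
  apply RInt_le; auto. eexists; eauto.
Qed.

Definition sinusoid (A B x : R) : R := A * cos x + B * sin x.

Lemma Rabs_sinusoid_le (A B M x : R) :
  A ^ 2 + B ^ 2 <= M ^ 2 -> 0 <= M -> Rabs (sinusoid A B x) <= M.
Proof.
  intros hAB hM. unfold sinusoid.
  pose proof (sin2_cos2 x) as hsc. unfold Rsqr in hsc.
  assert ((A * cos x + B * sin x) ^ 2 + (A * sin x - B * cos x) ^ 2 = A ^ 2 + B ^ 2)
    by (rewrite <- (Rmult_1_r (A ^ 2 + B ^ 2)), <- hsc; ring).
  apply Rabs_le. pose proof (pow2_ge_0 (A * sin x - B * cos x)). split; nra.
Qed.

Lemma sinusoid_opp (A B x : R) : sinusoid A B (- x) = sinusoid A (- B) x.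
Proof. unfold sinusoid. rewrite cos_neg, sin_neg. ring. Qed.

Lemma continuity_pt_sinusoid_comp (A B : R) (phi : R -> R) (u : R) :
  continuity_pt phi u -> continuity_pt (fun v => sinusoid A B (phi v)) u.
Proof.
  intros hphi. unfold sinusoid.
  apply continuity_pt_plus; apply continuity_pt_mult;
    try (apply continuity_pt_const; intros ? ?; reflexivity).
  - apply (continuity_pt_comp phi cos); [exact hphi|apply continuity_cos].
  - apply (continuity_pt_comp phi sin); [exact hphi|apply continuity_sin].
Qed.

Section VanDerCorput.

Variables (A B M a b D : R) (phi dphi d2phi : R -> R).
Hypotheses (hab : a <= b) (hD : 0 < D) (hAB : A ^ 2 + B ^ 2 <= M ^ 2) (hM : 0 <= M).
Hypothesis phi_deriv : forall u, a <= u <= b -> is_derive phi u (dphi u).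
Hypothesis dphi_deriv : forall u, a <= u <= b -> is_derive dphi u (d2phi u).
Hypothesis d2phi_cont : forall u, a <= u <= b -> continuity_pt d2phi u.
Hypothesis dphi_ge : forall u, a <= u <= b -> D <= dphi u.

Let Rabs_sinusoid_conj_le u : Rabs (sinusoid (- B) A (phi u)) <= M.
Proof. apply Rabs_sinusoid_le; [lra|exact hM]. Qed.

Let continuity_pt_phi u : a <= u <= b -> continuity_pt phi u.
Proof. intros hu. apply derivable_continuous_pt. exists (dphi u). apply is_derive_Reals, phi_deriv, hu. Qed.

Let continuity_pt_dphi u : a <= u <= b -> continuity_pt dphi u.
Proof. intros hu. apply derivable_continuous_pt. exists (d2phi u). apply is_derive_Reals, dphi_deriv, hu. Qed.

(* [sinusoid (-B) A] is a primitive of [sinusoid A B]; the constant [c] is chosen so that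
   the correction term coming from [d2phi] has a sign. *)
Lemma RInt_sinusoid_phase_le_shift (c : R) :
  Rabs c = M ->
  (forall u, a <= u <= b -> (sinusoid (- B) A (phi u) + c) * d2phi u <= 0) ->
  RInt (fun u => sinusoid A B (phi u)) a b <= 2 * M / D.
Proof.
  intros hc hsign.
  set (W := fun u => sinusoid (- B) A (phi u) + c).
  eapply Rle_trans.
  - apply (RInt_le_sub_antiderivative _ (fun u => W u / dphi u)
      (fun u => sinusoid A B (phi u) - W u * d2phi u / (dphi u * dphi u))); [exact hab| | | |].
    + intros u hu. pose proof (phi_deriv u hu) as hphi. pose proof (dphi_deriv u hu) as hdphi.
      pose proof (dphi_ge u hu).
      unfold W, sinusoid. auto_derive.
      * repeat split; try (eexists; eassumption). lra.
      * replace (Derive (fun x => phi x) u) with (dphi u) by (symmetry; apply is_derive_unique, hphi).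
        replace (Derive (fun x => dphi x) u) with (d2phi u) by (symmetry; apply is_derive_unique, hdphi).
        field. lra.
    + intros u hu. pose proof (dphi_ge u hu).
      apply continuity_pt_minus; [apply continuity_pt_sinusoid_comp, continuity_pt_phi, hu|].
      apply continuity_pt_div; [apply continuity_pt_mult| |].
      * apply continuity_pt_plus; [apply continuity_pt_sinusoid_comp, continuity_pt_phi, hu|].
        apply continuity_pt_const. intros ? ?. reflexivity.
      * apply d2phi_cont, hu.
      * apply continuity_pt_mult; apply continuity_pt_dphi, hu.
      * apply Rgt_not_eq. nra.
    + intros u hu. assert (hu' : a <= u <= b) by lra.
      pose proof (hsign u hu') as hWsign. pose proof (dphi_ge u hu').
      assert (W u * d2phi u / (dphi u * dphi u) <= 0); [|lra].
      unfold Rdiv. apply Rmult_le_0_r; [exact hWsign|].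
      apply Rlt_le, Rinv_0_lt_compat. nra.
    + apply (ex_RInt_continuous (V := R_CompleteNormedModule)).
      rewrite Rmin_left, Rmax_right by lra. intros u hu.
      apply continuity_pt_filterlim, continuity_pt_sinusoid_comp, continuity_pt_phi, hu.
  - assert (ha : a <= a <= b) by lra. assert (hb : a <= b <= b) by lra.
    pose proof (dphi_ge a ha). pose proof (dphi_ge b hb).
    pose proof (Rabs_sinusoid_conj_le a) as hWa. pose proof (Rabs_sinusoid_conj_le b) as hWb.
    apply Rabs_le_between in hWa. apply Rabs_le_between in hWb.
    assert (hia : / dphi a <= / D) by (apply Rinv_le_contravar; lra).
    assert (hib : / dphi b <= / D) by (apply Rinv_le_contravar; lra).
    assert (0 < / dphi a) by (apply Rinv_0_lt_compat; lra).
    assert (0 < / dphi b) by (apply Rinv_0_lt_compat; lra).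
    unfold W, Rdiv.
    destruct (Rcase_abs c);
      [rewrite Rabs_left in hc by lra|rewrite Rabs_right in hc by lra]; nra.
Qed.

Lemma RInt_sinusoid_phase_le :
  (forall u, a <= u <= b -> 0 <= d2phi u) \/ (forall u, a <= u <= b -> d2phi u <= 0) ->
  RInt (fun u => sinusoid A B (phi u)) a b <= 2 * M / D.
Proof.
  intros [hconvex|hconcave].
  - apply (RInt_sinusoid_phase_le_shift (- M)); [rewrite Rabs_Ropp, Rabs_right; lra|].
    intros u hu. pose proof (Rabs_sinusoid_conj_le u) as hW. apply Rabs_le_between in hW.
    apply Rmult_le_0_r; [lra|auto].
  - apply (RInt_sinusoid_phase_le_shift M); [rewrite Rabs_right; lra|].
    intros u hu. pose proof (Rabs_sinusoid_conj_le u) as hW. apply Rabs_le_between in hW.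
    apply Rmult_le_0_l; [lra|auto].
Qed.

End VanDerCorput.

Definition dh (y z u : R) : R := y - z + 2 * ln u - 2 * ln (1 - u).
Definition d2h (u : R) : R := 2 / u + 2 / (1 - u).

Lemma continuity_pt_h (y z u : R) : 0 <= u <= 1 -> continuity_pt (h y z) u.
Proof.
  intros hu.
  apply continuity_pt_ext with
    (f := fun u => u * y + (1 - u) * z + 2 * (u * ln u) + 2 * ((1 - u) * ln (1 - u)) + 1).
  { intros v. unfold h. ring. }
  assert (hconst : forall k, continuity_pt (fun _ => k) u)
    by (intros k; apply continuity_pt_const; intros ? ?; reflexivity).
  assert (hid : continuity_pt id u) by apply continuity_pt_id.
  assert (hrefl : continuity_pt (fun v => 1 - v) u) by (apply continuity_pt_minus; auto).
  assert (hxlnx : continuity_pt (fun v => v * ln v) u) by (apply continuity_pt_xlnx; lra).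
  assert (hxlnx_refl : continuity_pt (fun v => (1 - v) * ln (1 - v)) u).
  { apply (continuity_pt_comp (fun v => 1 - v) (fun v => v * ln v)); [exact hrefl|].
    apply continuity_pt_xlnx; lra. }
  repeat apply continuity_pt_plus; try apply continuity_pt_mult; auto.
Qed.

Lemma is_derive_h (y z u : R) : 0 < u < 1 -> is_derive (h y z) u (dh y z u).
Proof.
  intros hu. unfold h, dh. auto_derive.
  - repeat split; lra.
  - replace (1 + - u) with (1 - u) by ring. field. lra.
Qed.

Lemma is_derive_dh (y z u : R) : 0 < u < 1 -> is_derive (dh y z) u (d2h u).
Proof.
  intros hu. unfold dh, d2h. auto_derive.
  - repeat split; lra.
  - field. lra.
Qed.

Lemma continuity_pt_d2h (u : R) : 0 < u < 1 -> continuity_pt d2h u.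
Proof.
  intros hu. apply derivable_continuous_pt.
  exists (- 2 / (u * u) + 2 / ((1 - u) * (1 - u))). apply is_derive_Reals.
  unfold d2h. auto_derive.
  - repeat split; lra.
  - field. lra.
Qed.

Lemma d2h_ge_8 (u : R) : 0 < u < 1 -> 8 <= d2h u.
Proof.
  intros hu. unfold d2h.
  replace (2 / u + 2 / (1 - u)) with (2 / (u * (1 - u))) by (field; lra).
  apply (Rmult_le_reg_r (u * (1 - u))); [nra|].
  unfold Rdiv. rewrite Rmult_assoc, Rinv_l by nra.
  pose proof (pow2_ge_0 (2 * u - 1)). nra.
Qed.

Definition stationary_point (y z : R) : R := / (1 + exp ((y - z) / 2)).

Lemma stationary_point_bounds (y z : R) : 0 < stationary_point y z < 1.
Proof.
  unfold stationary_point. pose proof (exp_pos ((y - z) / 2)). split.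
  - apply Rinv_0_lt_compat; lra.
  - rewrite <- Rinv_1. apply Rinv_lt_contravar; lra.
Qed.

Lemma dh_stationary_point (y z : R) : dh y z (stationary_point y z) = 0.
Proof.
  unfold dh, stationary_point. set (e := exp ((y - z) / 2)).
  assert (he : 0 < e) by apply exp_pos.
  replace (1 - / (1 + e)) with (e * / (1 + e)) by (field; lra).
  rewrite ln_mult by (try apply Rinv_0_lt_compat; lra).
  unfold e. rewrite ln_exp. field.
Qed.

Lemma dh_mul_ge (y z u : R) : 0 < u < 1 ->
  8 * (u - stationary_point y z) ^ 2 <= dh y z u * (u - stationary_point y z).
Proof.
  intros hu. pose proof (stationary_point_bounds y z) as hm.
  set (m := stationary_point y z) in *.
  assert (hbetween : forall v, Rmin m u <= v <= Rmax m u -> 0 < v < 1).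
  { intros v hv. pose proof (Rmin_glb_lt _ _ _ (proj1 hm) (proj1 hu)).
    pose proof (Rmax_lub_lt _ _ _ (proj2 hm) (proj2 hu)). lra. }
  destruct (MVT_gen (dh y z) m u d2h) as [c [hc hmvt]].
  - intros v hv. apply is_derive_dh, hbetween. lra.
  - intros v hv. apply derivable_continuous_pt. exists (d2h v).
    apply is_derive_Reals, is_derive_dh, hbetween, hv.
  - unfold m in hmvt at 2. rewrite dh_stationary_point, Rminus_0_r in hmvt.
    rewrite hmvt, Rmult_assoc, <- Rsqr_pow2.
    apply Rmult_le_compat_r; [apply Rle_0_sqr|apply d2h_ge_8, hbetween, hc].
Qed.

Lemma ex_RInt_comp_h (g : R -> R) (y z k p q : R) :
  (forall x, continuity_pt g x) -> 0 <= p -> p <= q -> q <= 1 ->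
  ex_RInt (fun u => g (k * h y z u)) p q.
Proof.
  intros hg hp hpq hq. apply (ex_RInt_continuous (V := R_CompleteNormedModule)).
  rewrite Rmin_left, Rmax_right by lra. intros u hu.
  apply continuity_pt_filterlim, (continuity_pt_comp (fun v => k * h y z v)); [|apply hg].
  apply continuity_pt_scal, continuity_pt_h. lra.
Qed.

Lemma RInt_sinusoid_scaled_h_le (y z A B M k a b D : R) :
  A ^ 2 + B ^ 2 <= M ^ 2 -> 0 <= M ->
  0 < a -> a <= b -> b < 1 -> 0 < D ->
  (forall u, a <= u <= b -> D <= k * dh y z u) ->
  RInt (fun u => sinusoid A B (k * h y z u)) a b <= 2 * M / D.
Proof.
  intros hAB hM ha hab hb hD hdh.
  apply (RInt_sinusoid_phase_le _ _ _ _ _ _ _ (fun u => k * dh y z u) (fun u => k * d2h u));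
    auto.
  - intros u hu. apply (is_derive_scal (fun v => h y z v)), is_derive_h. lra.
  - intros u hu. apply (is_derive_scal (fun v => dh y z v)), is_derive_dh. lra.
  - intros u hu. apply continuity_pt_scal, continuity_pt_d2h. lra.
  - destruct (Rle_lt_dec 0 k); [left|right]; intros u hu;
      pose proof (d2h_ge_8 u ltac:(lra)); nra.
Qed.

Section OscillatoryIntegral.

Variables (y z A B M s : R).
Hypotheses (hAB : A ^ 2 + B ^ 2 <= M ^ 2) (hM : 0 <= M) (hs : 0 < s).

Local Notation m := (stationary_point y z).

Lemma RInt_sinusoid_h_right_le (q d : R) : q < 1 -> 0 < d ->
  RInt (fun u => sinusoid A B (s * h y z u)) (Rmin q (m + d)) q <= M / (4 * s * d).
Proof.
  intros hq hd. pose proof (stationary_point_bounds y z).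
  destruct (Rle_dec q (m + d)) as [hle|hgt].
  - rewrite Rmin_left, RInt_point by exact hle. apply Rdiv_le_0_compat; [exact hM|].
    apply Rmult_lt_0_compat; lra.
  - rewrite Rmin_right by lra.
    replace (M / (4 * s * d)) with (2 * M / (8 * s * d)) by (field; lra).
    apply RInt_sinusoid_scaled_h_le with (M := M); try lra; [apply Rmult_lt_0_compat; lra|].
    intros u hu. pose proof (dh_mul_ge y z u ltac:(lra)) as hgrowth.
    assert (8 * (u - m) <= dh y z u) by (apply (Rmult_le_reg_r (u - m)); lra).
    replace (8 * s * d) with (s * (8 * d)) by ring.
    apply Rmult_le_compat_l; lra.
Qed.

Lemma RInt_sinusoid_h_left_le (p d : R) : 0 < p -> 0 < d ->
  RInt (fun u => sinusoid A B (s * h y z u)) p (Rmax p (m - d)) <= M / (4 * s * d).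
Proof.
  intros hp hd. pose proof (stationary_point_bounds y z).
  destruct (Rle_dec (m - d) p) as [hle|hgt].
  - rewrite Rmax_left, RInt_point by exact hle. apply Rdiv_le_0_compat; [exact hM|].
    apply Rmult_lt_0_compat; lra.
  - rewrite Rmax_right by lra.
    replace (M / (4 * s * d)) with (2 * M / (8 * s * d)) by (field; lra).
    rewrite (RInt_ext _ (fun u => sinusoid A (- B) (- s * h y z u))).
    2: { intros u _. rewrite Ropp_mult_distr_l_reverse, sinusoid_opp, Ropp_involutive. reflexivity. }
    apply RInt_sinusoid_scaled_h_le with (M := M); try lra; [apply Rmult_lt_0_compat; lra|].
    intros u hu. pose proof (dh_mul_ge y z u ltac:(lra)) as hgrowth.
    assert (dh y z u <= 8 * (u - m)) by (apply (Rmult_le_reg_r (m - u)); lra).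
    replace (8 * s * d) with (s * (8 * d)) by ring.
    replace (- s * dh y z u) with (s * - dh y z u) by ring.
    apply Rmult_le_compat_l; lra.
Qed.

Let f (u : R) : R := sinusoid A B (s * h y z u).

Let ex_RInt_f (p q : R) : 0 <= p -> p <= q -> q <= 1 -> ex_RInt f p q.
Proof.
  intros. apply (ex_RInt_comp_h (sinusoid A B)); auto.
  intros x. apply continuity_pt_sinusoid_comp, continuity_pt_id.
Qed.

Let f_le (u : R) : f u <= M.
Proof.
  pose proof (Rabs_sinusoid_le A B M (s * h y z u) hAB hM) as hbound.
  apply Rabs_le_between in hbound. unfold f. lra.
Qed.

Lemma RInt_sinusoid_h_around_stationary_le (a b : R) :
  0 < a -> a <= m <= b -> b < 1 -> RInt f a b <= M * (2 * / sqrt s).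
Proof.
  intros ha hm hb.
  assert (hsq : 0 < sqrt s) by (apply sqrt_lt_R0, hs).
  assert (hss : sqrt s * sqrt s = s) by (apply sqrt_sqrt; lra).
  set (r := / (2 * sqrt s)).
  assert (hr : 0 < r) by (apply Rinv_0_lt_compat; lra).
  pose proof (Rmax_l a (m - r)). pose proof (Rmax_r a (m - r)).
  pose proof (Rmin_l b (m + r)). pose proof (Rmin_r b (m + r)).
  assert (Rmax a (m - r) <= m) by (apply Rmax_lub; lra).
  assert (m <= Rmin b (m + r)) by (apply Rmin_glb; lra).
  set (a1 := Rmax a (m - r)) in *. set (b1 := Rmin b (m + r)) in *.
  rewrite <- (RInt_Chasles f a a1 b), <- (RInt_Chasles f a1 b1 b) by (apply ex_RInt_f; lra).
  cbv [plus]. simpl.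
  pose proof (RInt_sinusoid_h_left_le a r ha hr) as hleft.
  pose proof (RInt_sinusoid_h_right_le b r hb hr) as hright.
  assert (hmid : RInt f a1 b1 <= M * (b1 - a1)).
  { apply RInt_le_mul_length; [lra|apply ex_RInt_f; lra|].
    intros u _. apply f_le. }
  assert (hwindow : M / (4 * s * r) = M * / (2 * sqrt s)).
  { unfold r. replace (4 * s) with (4 * (sqrt s * sqrt s)) by (rewrite hss; reflexivity).
    field. lra. }
  rewrite hwindow in hleft, hright. fold f a1 b1 in hleft, hright.
  replace (M * (2 * / sqrt s)) with (M * / (2 * sqrt s) + M * / (2 * sqrt s) + M * (2 * r))
    by (unfold r; field; lra).
  assert (M * (b1 - a1) <= M * (2 * r)) by (apply Rmult_le_compat_l; lra).
  lra.
Qed.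

(* The endpoints, where the phase derivative blows up, are cut off by strips of vanishing width. *)
Lemma RInt_sinusoid_h_unit_le : RInt f 0 1 <= M * (2 * / sqrt s).
Proof.
  pose proof (stationary_point_bounds y z).
  apply Rle_plus_epsilon. intros e he.
  assert (hpos : 0 < Rmin (Rmin m (1 - m)) (e / (2 * M + 1)))
    by (apply Rmin_pos; [apply Rmin_pos|apply Rdiv_lt_0_compat]; lra).
  pose proof (Rmin_l (Rmin m (1 - m)) (e / (2 * M + 1))).
  pose proof (Rmin_r (Rmin m (1 - m)) (e / (2 * M + 1))) as heps.
  pose proof (Rmin_l m (1 - m)). pose proof (Rmin_r m (1 - m)).
  set (eps := Rmin (Rmin m (1 - m)) (e / (2 * M + 1))) in *.
  assert (eps * (2 * M + 1) <= e).
  { apply (Rmult_le_compat_r (2 * M + 1)) in heps; [|lra].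
    unfold Rdiv in heps. rewrite Rmult_assoc, Rinv_l in heps by lra. lra. }
  rewrite <- (RInt_Chasles f 0 eps 1), <- (RInt_Chasles f eps (1 - eps) 1)
    by (apply ex_RInt_f; lra).
  cbv [plus]. simpl.
  assert (RInt f 0 eps <= M * (eps - 0))
    by (apply RInt_le_mul_length; [lra|apply ex_RInt_f; lra|intros; apply f_le]).
  assert (RInt f (1 - eps) 1 <= M * (1 - (1 - eps)))
    by (apply RInt_le_mul_length; [lra|apply ex_RInt_f; lra|intros; apply f_le]).
  pose proof (RInt_sinusoid_h_around_stationary_le eps (1 - eps) ltac:(lra) ltac:(lra) ltac:(lra)).
  lra.
Qed.

End OscillatoryIntegral.

Lemma RInt_sinusoid_h_le (y z A B M s : R) :
  A ^ 2 + B ^ 2 <= M ^ 2 -> 0 <= M -> s <> 0 ->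
  RInt (fun u => sinusoid A B (s * h y z u)) 0 1 <= M * (2 * / sqrt (Rabs s)).
Proof.
  intros hAB hM hs. destruct (Rle_lt_dec 0 s) as [hpos|hneg].
  - rewrite Rabs_right by lra. apply RInt_sinusoid_h_unit_le; auto; lra.
  - rewrite Rabs_left by lra.
    rewrite (RInt_ext _ (fun u => sinusoid A (- B) (- s * h y z u))).
    2: { intros u _. rewrite Ropp_mult_distr_l_reverse, sinusoid_opp, Ropp_involutive. reflexivity. }
    apply RInt_sinusoid_h_unit_le; lra.
Qed.

Lemma Cmod_RInt_le (f : R -> C) (a b K : R) :
  0 <= K ->
  ex_RInt (fun u => fst (f u)) a b -> ex_RInt (fun u => snd (f u)) a b ->
  (forall A B, RInt (fun u => A * fst (f u) + B * snd (f u)) a b <= Cmod (A, B) * K) ->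
  Cmod (RInt (V := C_R_CompleteNormedModule) f a b) <= K.
Proof.
  intros hK hfst hsnd hproj.
  set (X := RInt (fun u => fst (f u)) a b). set (Y := RInt (fun u => snd (f u)) a b).
  assert (hpair : RInt (V := C_R_CompleteNormedModule) f a b = (X, Y)).
  { apply (is_RInt_unique (V := C_R_CompleteNormedModule)).
    apply (is_RInt_fct_extend_pair (U := R_NormedModule) (V := R_NormedModule));
      [exact (RInt_correct _ _ _ hfst)|exact (RInt_correct _ _ _ hsnd)]. }
  assert (hXY : RInt (fun u => X * fst (f u) + Y * snd (f u)) a b = X * X + Y * Y).
  { apply is_RInt_unique.
    apply (is_RInt_plus (V := R_NormedModule) (fun u => X * fst (f u)) (fun u => Y * snd (f u))
      a b (X * X) (Y * Y));
      apply (is_RInt_scal (V := R_NormedModule));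
      [exact (RInt_correct _ _ _ hfst)|exact (RInt_correct _ _ _ hsnd)]. }
  specialize (hproj X Y). rewrite hXY in hproj.
  rewrite hpair. change (Cmod (@pair R R X Y) <= K).
  pose proof (Cmod2_alt (X, Y)) as hmod. simpl in hmod.
  pose proof (Cmod_ge_0 (X, Y)). nra.
Qed.

Theorem lemma2p3 (y z t : R) (ht : t <> 0) :
  Cmod (charfun_h y z t) <= 2 * / sqrt (Rabs t).
Proof.
  assert (hsqrt : 0 < sqrt (Rabs t)) by (apply sqrt_lt_R0, Rabs_pos_lt, ht).
  apply Cmod_RInt_le.
  - apply Rlt_le, Rmult_lt_0_compat, Rinv_0_lt_compat; lra.
  - apply (ex_RInt_comp_h cos); try lra. apply continuity_cos.
  - apply (ex_RInt_comp_h sin); try lra. apply continuity_sin.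
  - intros A B. apply (RInt_sinusoid_h_le y z A B); [|apply Cmod_ge_0|exact ht].
    right. rewrite Cmod2_alt. reflexivity.
Qed.
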